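(* Let $b\ge1$, $g=4b^2$, and let $D$ be a digraph with directed girth at least $g$ such that for every arc $(x,y)\in A(D)$, either $D$ contains a directed cycle of length exactly $g$ through $(x,y)$, or there is $z\in V(D)\setminus\{x,y\}$ with $(z,x),(z,y)\in A(D)$. Then for every $(p,q)\in A(D)$ there is a gadget $G$ contained in $D$ which is either of type I or an extended gadget of type II, with $p(G)=p$, $q(G)=q$ and $|V(G)|\le 2g$.
   Context: Digraphs are finite, loopless, without parallel arcs (digons allowed); the directed girth is the minimum length of a directed cycle. Gadgets have designated vertices $p,q$ with arc $(p,q)$. Type I: a directed cycle of length at least $g$ through $(p,q)$. Basic type II: vertices $p,q,r$ and a directed path $P_1$ from $r$ to $p$ of length at least $2b^2+b-2$ with $q\notin V(P_1)$, every vertex of $P_1$ having an arc to $q$. Extended type II: a basic type-II gadget plus a directed path $P_2$ of length at least $b$ whose last vertex is $r$, with $V(P_1)\cap V(P_2)=\{r\}$, $q\notin V(P_2)$, and either an arc from the first vertex of $P_2$ to the second vertex of $P_1$, or an arc from some vertex of $V(P_1)\setminus\{r\}$ to the first vertex of $P_2$. *)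

(* A digraph is a finite vertex type T with an arc relation
   a : rel T (no parallel arcs automatically; digons allowed). *)
From mathcomp Require Import all_boot.
Set Implicit Arguments. Unset Strict Implicit. Unset Printing Implicit Defensive.

Section Digraphs.
Variables (T : finType) (a : rel T).

Definition loopless : Prop := forall x, ~~ a x x.

Definition dicycle (c : seq T) : bool := [&& c != [::], uniq c & cycle a c].

Definition girth_ge (g : nat) : Prop :=
  forall c, dicycle c -> g <= size c.

Definition cycle_through (x y : T) (s : seq T) : bool := dicycle (x :: y :: s).

(* A directed path given as x :: s : distinct vertices, arcs between consecutive
   vertices; first vertex x, last vertex last x s, length size s. *)
Definition dipath (x : T) (s : seq T) : bool := uniq (x :: s) && path a x s.

Definition gadgetI (g n : nat) (p q : T) : Prop :=
  exists s, [/\ cycle_through p q s, g <= size (p :: q :: s)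
              & #|[set v | v \in p :: q :: s]| <= n].

(* Extended gadget of type II with p(G)=p, q(G)=q and at most n vertices.
   P1 = r :: s1 (from r to p), P2 = x :: s2 (from x to r). *)
Definition gadgetII_ext (b n : nat) (p q : T) : Prop :=
  exists r s1 x s2,
    [/\
        [/\ dipath r s1, last r s1 = p, 2 * b ^ 2 + b - 2 <= size s1,
            q \notin r :: s1 & all (fun v => a v q) (r :: s1)],
        [/\ dipath x s2, last x s2 = r, b <= size s2,
            (forall v, v \in r :: s1 -> v \in x :: s2 -> v = r)
          & q \notin x :: s2],
        (* second vertex of P1 is head r s1 (s1 is nonempty since b >= 1);
           V(P1) \ {r} = s1 since P1 is duplicate-free *)
        a x (head r s1) || has (fun v => a v x) s1
      & #|[set v | v \in q :: (r :: s1) ++ (x :: s2)]| <= n].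

End Digraphs.

From mathcomp Require Import all_boot zify.
Set Implicit Arguments. Unset Strict Implicit. Unset Printing Implicit Defensive.

(* Grow backwards from the arc (p,q) a path P1 ending at p all of whose
   vertices dominate q.  At each step the first arc (r,q) of the path either
   lies on a g-cycle, which together with P1 closes a cycle of length at least
   g through (p,q) (type I), or (r,q) has a common in-neighbour z, and z
   extends P1: since z dominates r, a repeated vertex would close a cycle
   shorter than g.  Once P1 has length 2b^2+b-2, grow in the same way a path
   P2 ending at r all of whose vertices dominate the second vertex y of P1; by
   the girth bound P2 avoids P1 and q.  If P2 reaches length b it is the
   extension of a type-II gadget.  Otherwise the first arc (u,y) of P2 lies on
   a g-cycle C; let t be the last vertex of C between y and u that lies on
   P1 + q.  If t = q, C yields a long cycle through (p,q); if t lies on P1,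
   the girth bound makes the segment of C from t to u have length at least b,
   and it prolongs P2 to the required extension, with the arc from t. *)

Lemma split_last (T : Type) (P : pred T) s : has P s ->
  exists s1 x s2, [/\ s = s1 ++ x :: s2, P x & ~~ has P s2].
Proof.
rewrite -has_rev => hP; rewrite -(revK s); case: (split_find hP) => x s1 s2 Px nPs1.
by exists (rev s2), x, (rev s1); rewrite rev_cat rev_rcons has_rev.
Qed.

Section Gadgets.
Variables (T : finType) (a : rel T) (g : nat).
Hypothesis girth : girth_ge a g.
Hypothesis noloop : loopless a.

Lemma dipath_cons x y s :
  dipath a x (y :: s) = [&& x \notin y :: s, a x y & dipath a y s].
Proof. by rewrite /dipath /= -!andbA; do !bool_congr. Qed.

Lemma dipath_cat x s y s' :
  dipath a x (s ++ y :: s') =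
  [&& dipath a x s, a (last x s) y, dipath a y s' & ~~ has (mem (x :: s)) (y :: s')].
Proof.
rewrite /dipath -cat_cons cat_uniq cat_path /= -!andbA; do !bool_congr.
Qed.

Lemma dicycle_cons x s : dicycle a (x :: s) = dipath a x s && a (last x s) x.
Proof. by rewrite /dicycle /dipath /= rcons_path andbA. Qed.

Lemma arc_notin_short_dipath x c v :
  dipath a x c -> (size c).+1 < g -> a v x -> v \notin x :: c.
Proof.
move=> hxc hc hvx; rewrite inE negb_or; apply/andP; split.
  by apply: contraTneq hvx => ->; apply: noloop.
apply/negP => /splitPr hv; case: hv hxc hc => c1 c2.
rewrite dipath_cat => /and4P[hx1 h1v _ /norP[hv1 _]] hc.
have hcyc : dicycle a (x :: rcons c1 v).
  by rewrite dicycle_cons last_rcons hvx -cats1 dipath_cat hx1 h1v /= orbF andbT.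
by move: (girth hcyc) hc; rewrite /= size_rcons size_cat /=; lia.
Qed.

Lemma gadgetI_of_dicycle n p q X :
  dicycle a (q :: X) -> last q X = p -> (size X).+1 <= n -> gadgetI a g n p q.
Proof.
case/lastP: X => [|X p'] hC.
  by rewrite dicycle_cons /= (negbTE (noloop q)) in hC.
rewrite last_rcons => <- hn.
have hpq : cycle_through a p' q X.
  by rewrite /cycle_through /dicycle -(rot_uniq 1) -(rot_cycle 1) rot1_cons.
exists X; split => //; first exact: girth hpq.
by rewrite cardsE (leq_trans (card_size _)) //; move: hn; rewrite /= size_rcons.
Qed.

Definition dominating_path (w r : T) (s : seq T) : bool :=
  dipath a r s && all (a^~ w) (r :: s).

Lemma dominating_path_cons w z r s :
  dominating_path w r s -> (size s).+1 < g -> a z r -> a z w ->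
  dominating_path w z (r :: s).
Proof.
move=> /andP[hrs hall] hs hzr hzw.
by rewrite /dominating_path dipath_cons arc_notin_short_dipath // hzr hrs /= hzw.
Qed.

Lemma gadgetI_of_dominating_path n p q u s D :
  a p q -> dominating_path q u s -> last u s = p ->
  cycle_through a u q D -> size (u :: q :: D) = g -> g + size s <= n ->
  gadgetI a g n p q.
Proof.
move=> hpq /andP[hus hall] hlast hC hD hn.
move: hC; rewrite /cycle_through dicycle_cons dipath_cons.
move=> /andP[/and3P[_ _ hqD] hDu].
have hqX : dipath a q (D ++ u :: s).
  rewrite dipath_cat hqD hDu hus; apply/hasPn => v /(allP hall).
  by apply: arc_notin_short_dipath; rewrite // -hD.
apply: (gadgetI_of_dicycle (X := D ++ u :: s)).
- by rewrite dicycle_cons hqX last_cat /= hlast.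
- by rewrite last_cat.
by rewrite size_cat /= -hD /= in hn *; lia.
Qed.

(* t is the last vertex of y :: D lying on y :: Z, and D2 the part of D after t. *)
Lemma girth_cycle_shortcut u y Z D :
  dipath a u (y :: Z) -> cycle_through a u y D ->
  exists t D2, [/\ t \in y :: Z, ~~ has (mem (y :: Z)) D2, subseq D2 D,
    dipath a t (rcons D2 u)
    & dicycle a (t :: D2 ++ u :: take (index t (y :: Z)) (y :: Z))].
Proof.
set K := y :: Z => hK.
rewrite /cycle_through dicycle_cons dipath_cons => /andP[/and3P[huD _ hyD] hDu].
have hyDu : dipath a y (rcons D u) by rewrite -cats1 dipath_cat hyD hDu /= orbF.
have hyK : has (mem K) (y :: D) by rewrite /= mem_head.
have [E [t [D2 [eD tK D2K]]]] := split_last hyK.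
have /hasPn D2notK := D2K.
have [htD2u sD2] : dipath a t (rcons D2 u) /\ subseq D2 D.
  move: hyDu; case: E eD => [|e E] [-> ->]; first by rewrite subseq_refl.
  by rewrite -cat_rcons suffix_subseq cat_rcons rcons_cat dipath_cat => /and4P[].
exists t, D2; split => //.
set A := take _ K.
have eK : K = A ++ t :: drop (index t K).+1 K by rewrite -drop_index // cat_take_drop.
move: (hK); rewrite eK dipath_cat => /and4P[huA hAt _ /norP[tA _]].
move: htD2u; rewrite -cats1 dipath_cat => /and4P[htD2 hD2u _ /norP[uD2 _]].
rewrite dicycle_cons last_cat /= hAt andbT dipath_cat htD2 hD2u huA.
apply/hasPn => v; rewrite in_cons => /predU1P[-> // | vA].
change (v \notin t :: D2); rewrite in_cons negb_or; apply/andP; split.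
  by apply: contraNneq tA => <-; apply: mem_behead.
have vK : v \in K by rewrite eK mem_cat vA.
by apply/negP => /D2notK /negP[].
Qed.

Lemma gadgetII_ext_intro b n p q r s1 x s2 :
  dominating_path q r s1 -> last r s1 = p -> 2 * b ^ 2 + b - 2 <= size s1 ->
  dipath a x s2 -> last x s2 = r -> b <= size s2 ->
  ~~ has (mem (rcons s1 q)) (x :: s2) -> a x (head r s1) || has (a^~ x) s1 ->
  size s1 + size s2 + 3 <= n -> gadgetII_ext a b n p q.
Proof.
move=> /andP[hrs1 hall] hlast hs1 hxs2 hlast2 hs2 /hasPn hdisj harc hn.
have qP2 v : v \in x :: s2 -> v \notin rcons s1 q by move/hdisj.
exists r, s1, x, s2; split => //.
- by split => //; apply/negP => /(allP hall); apply/negP/noloop.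
- split => //.
    move=> v; rewrite in_cons => /predU1P[//|vs1] /qP2.
    by rewrite mem_rcons in_cons vs1 orbT.
  by apply/negP => /qP2; rewrite mem_rcons mem_head.
by rewrite cardsE (leq_trans (card_size _)) //= size_cat /=; lia.
Qed.

Lemma gadget_of_detour b n p q r y s1 u s2 D :
  0 < b -> b + size (y :: s1) < g -> size (y :: s1) + g + b <= n ->
  2 * b ^ 2 + b - 2 <= size (y :: s1) ->
  dominating_path q r (y :: s1) -> last y s1 = p -> dipath a y (rcons s1 q) ->
  dominating_path y u s2 -> last u s2 = r -> size s2 < b ->
  cycle_through a u y D -> size (u :: y :: D) = g ->
  gadgetI a g n p q \/ gadgetII_ext a b n p q.
Proof.
move=> b0 hbg hn hL hP1 hlast hK /andP[hus2 hall2] hlast2 hs2 hC hD.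
have notinK v : a v y -> v \notin y :: rcons s1 q.
  by apply: arc_notin_short_dipath hK _; rewrite size_rcons; move: hbg => /=; lia.
have huy : a u y by case/andP: hall2.
have huK : dipath a u (y :: rcons s1 q) by rewrite dipath_cons notinK // huy hK.
have hyD : dipath a y D.
  by move: (hC); rewrite /cycle_through dicycle_cons dipath_cons => /andP[/and3P[_ _ ->]].
have [t [D2 [tK D2K sD2 htD2u hcyc]]] := girth_cycle_shortcut huK hC.
have hD2 : size D2 + 2 <= g by rewrite -hD /= !addn2 ltnS ltnS size_subseq.
have qS : q \notin y :: s1.
  by move: hK; rewrite -cats1 dipath_cat => /and4P[_ _ _]; rewrite /= orbF.
case: (eqVneq t q) => [etq | ntq].
  left; move: hcyc; rewrite etq -[y :: rcons s1 q]/(rcons (y :: s1) q) -cats1.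
  rewrite index_cat (negPf qS) /= eqxx addn0 take_size_cat // => hcyc.
  apply: (gadgetI_of_dicycle hcyc); first by rewrite last_cat.
  by rewrite size_cat /=; move: hD2 hn => /=; clear; lia.
have tS : t \in y :: s1.
  move: tK; rewrite -[y :: rcons s1 q]/(rcons (y :: s1) q) mem_rcons in_cons.
  by rewrite (negPf ntq).
have hgD2 : g <= size D2 + size (y :: s1) + 1.
  have hidx : index t (y :: rcons s1 q) < size (y :: s1).
    by rewrite -[y :: rcons s1 q]/(rcons (y :: s1) q) -cats1 index_cat tS index_mem.
  move: (girth hcyc); rewrite /= size_cat /= size_takel.
    by move: hidx => /=; clear; lia.
  by move: hidx; rewrite /= size_rcons; clear; lia.
case: D2 => [|x D2'] in D2K sD2 htD2u hcyc hD2 hgD2 *.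
  by move: hbg b0 hgD2 => /=; clear; lia.
move: htD2u; rewrite -cats1 cat_cons dipath_cons dipath_cat.
move=> /and3P[_ htx /and4P[hxD2 hD2u _ _]].
right; apply: (gadgetII_ext_intro (x := x) (s2 := D2' ++ u :: s2) hP1 hlast hL).
- rewrite dipath_cat hxD2 hD2u hus2; apply/hasPn => v /(allP hall2) hvy.
  have : v \notin y :: D by apply: arc_notin_short_dipath hyD _ hvy; rewrite -hD.
  by apply: contra => /(mem_subseq sD2) hvD; rewrite in_cons hvD orbT.
- by rewrite last_cat.
- by rewrite size_cat /=; move: hD2 hbg hgD2 => /=; clear; lia.
- rewrite -cat_cons has_cat negb_or D2K; apply/hasPn => v /(allP hall2).
  exact: notinK.
- by apply/orP; right; apply/hasP; exists t.
by rewrite !size_cat /=; move: hD2 hn hs2 => /=; clear; lia.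
Qed.

Hypothesis arc_cases : forall x y, a x y ->
  (exists s, cycle_through a x y s /\ size (x :: y :: s) = g) \/
  (exists z, [/\ z != x, z != y, a z x & a z y]).

Lemma dominating_path_grow w v : a v w -> forall n, n < g ->
  (exists u s D, [/\ dominating_path w u s, last u s = v, size s < n,
                     cycle_through a u w D & size (u :: w :: D) = g]) \/
  (exists u s, [/\ dominating_path w u s, last u s = v & size s = n]).
Proof.
move=> hvw; elim=> [|n IH] hn.
  by right; exists v, [::]; rewrite /dominating_path /dipath /= hvw.
case: IH => [|[u [s [D [hP hlast hs hC hD]]]] | [u [s [hP hlast hs]]]]; first lia.
  by left; exists u, s, D; split => //; lia.
have huw : a u w by case/andP: hP => _ /andP[].
case: (arc_cases huw) => [[D [hC hD]] | [z [_ _ hzu hzw]]].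
  by left; exists u, s, D; rewrite hs.
right; exists z, (u :: s); split => //=; last by rewrite hs.
by apply: dominating_path_cons; rewrite // hs.
Qed.

Lemma gadget_of_dominating_path b n p q r y s1 :
  0 < b -> b + size (y :: s1) < g -> size (y :: s1) + g + b <= n ->
  2 * b ^ 2 + b - 2 <= size (y :: s1) ->
  a p q -> dominating_path q r (y :: s1) -> last y s1 = p ->
  gadgetI a g n p q \/ gadgetII_ext a b n p q.
Proof.
move=> b0 hbg hn hL hpq hP1 hlast.
move: (hP1) => /andP[]; rewrite dipath_cons => /and3P[_ hry hys1] hall.
have hK : dipath a y (rcons s1 q).
  rewrite -cats1 dipath_cat hys1 hlast hpq /= orbF.
  by apply/negP => hq; move: (noloop q); rewrite (allP hall) // in_cons hq orbT.
case: (dominating_path_grow hry (n := b)) =>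
  [|[u [s2 [D [hP2 hl2 hs2 hC hD]]]] | [u [s2 [hP2 hl2 hs2]]]].
- by move: hbg => /=; clear; lia.
- exact: gadget_of_detour hP1 hlast hK hP2 hl2 hs2 hC hD.
case/andP: hP2 => hus2 hall2.
right; apply: (gadgetII_ext_intro hP1 hlast hL hus2 hl2); first by rewrite hs2.
- apply/hasPn => v /(allP hall2) /(arc_notin_short_dipath hK).
  by apply; rewrite size_rcons; move: hbg b0 => /=; clear; lia.
- by case/andP: hall2 => ->.
by rewrite hs2; move: hn hbg b0 => /=; clear; lia.
Qed.

Lemma gadget_of_arc b L n p q :
  0 < b -> 2 * b ^ 2 + b - 2 <= L -> b + L < g -> L + g + b <= n -> a p q ->
  gadgetI a g n p q \/ gadgetII_ext a b n p q.
Proof.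
move=> b0 hL hbg hn hpq.
case: (dominating_path_grow hpq (n := L)) =>
  [|[u [s [D [hP hlast hs hC hD]]]] | [r [[|y s1] [hP hlast hs]]]].
- by move: hbg; clear; lia.
- left; apply: (gadgetI_of_dominating_path hpq hP hlast hC hD).
  by move: hs hn; clear; lia.
- by move: hs hL b0 => /= <-; clear; lia.
- by rewrite -hs in hbg hn hL; apply: gadget_of_dominating_path hpq hP hlast.
Qed.

End Gadgets.

Theorem lemma2p10 (b : nat) (T : finType) (a : rel T) :
  1 <= b ->
  loopless a ->
  girth_ge a (4 * b ^ 2) ->
  (forall x y, a x y ->
     (exists s, cycle_through a x y s /\ size (x :: y :: s) = 4 * b ^ 2) \/
     (exists z, [/\ z != x, z != y, a z x & a z y])) ->
  forall p q, a p q ->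
    gadgetI a (4 * b ^ 2) (2 * (4 * b ^ 2)) p q \/
    gadgetII_ext a b (2 * (4 * b ^ 2)) p q.
Proof.
move=> b0 noloop girth arc_cases p q hpq.
have hb2 : b <= b ^ 2 by rewrite -{1}(expn1 b) leq_pexp2l.
apply: (gadget_of_arc girth noloop arc_cases (L := 2 * b ^ 2 + b - 2)) => //; lia.
Qed.
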